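(* Let $\mathcal{X}$ be a finite set and let $P_X$ be a probability distribution on $\mathcal{X}$. For every $\alpha\in[0,\infty)$, $$\min_{P_{\hat{X}}} H_\alpha(P_X,P_{\hat{X}}) = H_\alpha(P_X),$$ where the minimum is over all probability distributions $P_{\hat{X}}$ on $\mathcal{X}$, and the minimum is attained at $P_{\hat{X}}^*=P_{X_\alpha}$.
   Context: $\mathrm{supp}(P_X)=\{x: P_X(x)>0\}$. The $\alpha$-cross entropy of two distributions $P_X,P_{\hat X}$ on $\mathcal{X}$ is $H_\alpha(P_X,P_{\hat X})=\frac{\alpha}{1-\alpha}\log\sum_{x}P_X(x)P_{\hat X}(x)^{\frac{\alpha-1}{\alpha}}$ for $\alpha\in(0,1)\cup(1,\infty)$; $H_0(P_X,P_{\hat X})=\log\max_{x\in\mathrm{supp}(P_X)}\frac{1}{P_{\hat X}(x)}$; $H_1(P_X,P_{\hat X})=-\sum_x P_X(x)\log P_{\hat X}(x)$; $H_\infty(P_X,P_{\hat X})=-\log\sum_x P_X(x)P_{\hat X}(x)$ (with the usual conventions that these may equal $+\infty$). The Rényi entropy is $H_\alpha(P_X)=\frac{1}{1-\alpha}\log\sum_x P_X(x)^\alpha$ for $\alpha\in(0,1)\cup(1,\infty)$, $H_0(P_X)=\log|\mathrm{supp}(P_X)|$, $H_1(P_X)=-\sum_x P_X(x)\log P_X(x)$, $H_\infty(P_X)=-\log\max_x P_X(x)$. The scaled distribution $P_{X_\alpha}$ is $P_{X_\alpha}(x)=P_X(x)^\alpha/\sum_{x'}P_X(x')^\alpha$ for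 $\alpha\in(0,\infty)$ (so $P_{X_1}=P_X$); $P_{X_0}(x)=1/|\mathrm{supp}(P_X)|$ for $x\in\mathrm{supp}(P_X)$ and $0$ otherwise; and for $\alpha=\infty$, $P_{X_\infty}(x)=1/|\arg\max_{x'}P_X(x')|$ for $x\in\arg\max_{x'}P_X(x')$ and $0$ otherwise. *)

From HB Require Import structures.
From mathcomp Require Import all_boot all_order all_algebra.
From mathcomp Require Import all_classical all_reals ereal exp.
Set Implicit Arguments.
Unset Strict Implicit.
Unset Printing Implicit Defensive.
Import Order.TTheory GRing.Theory Num.Theory.
Local Open Scope ring_scope.

Section Defs.
Variables (R : realType) (T : finType).

Definition is_dist (P : T -> R) : Prop :=
  (forall x, 0 <= P x) /\ \sum_(x : T) P x = 1.

Definition supp (P : T -> R) : {set T} := [set x | 0 < P x].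

Definition cross_ent (alpha : R) (P Q : T -> R) : \bar R :=
  if alpha == 0 then
    if [exists x, (x \in supp P) && (Q x == 0)] then +oo%E
    else (ln (\big[Num.max/0]_(x in supp P) (Q x)^-1))%:E
  else if alpha == 1 then
    if [exists x, (x \in supp P) && (Q x == 0)] then +oo%E
    else (- \sum_(x : T) P x * ln (Q x))%:E
  else if alpha < 1 then
    (* 0 < alpha < 1: exponent (alpha-1)/alpha < 0, so Q x = 0 on supp P
       makes a summand (and the whole expression) +oo *)
    if [exists x, (x \in supp P) && (Q x == 0)] then +oo%E
    else (alpha / (1 - alpha) *
          ln (\sum_(x in supp P) P x * Q x `^ ((alpha - 1) / alpha)))%:E
  else
    (* alpha > 1: exponent > 0; the sum is finite, and if it is 0 the
       logarithm is -oo and alpha/(1-alpha) < 0 gives +oo *)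
    let s := \sum_(x : T) P x * Q x `^ ((alpha - 1) / alpha) in
    if s == 0 then +oo%E
    else (alpha / (1 - alpha) * ln s)%:E.

Definition renyi (alpha : R) (P : T -> R) : \bar R :=
  if alpha == 0 then (ln (#|supp P|%:R))%:E
  else if alpha == 1 then (- \sum_(x : T) P x * ln (P x))%:E
  else ((1 - alpha)^-1 * ln (\sum_(x : T) P x `^ alpha))%:E.

Definition scaled (P : T -> R) (alpha : R) : T -> R :=
  fun x =>
    if alpha == 0 then (if x \in supp P then (#|supp P|%:R)^-1 else 0)
    else P x `^ alpha / \sum_(y : T) P y `^ alpha.

End Defs.

(* For alpha outside {0, 1} put e = (alpha - 1) / alpha and Z = sum_x P x ^ alpha.
   Pointwise P x * Q x ^ e = Z ^ (1 / alpha) * P_alpha x * (Q x / P_alpha x) ^ e, so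
     H_alpha(P, Q) = H_alpha(P) + alpha / (1 - alpha) * ln ratio_sum Q
   with ratio_sum Q = sum_(x in supp P) P_alpha x * (Q x / P_alpha x) ^ e.
   The tangent line of t |-> t ^ e at t = 1 lies below it for e < 0 and above it for
   0 < e < 1; averaging against P_alpha and using sum Q <= 1 shows that ratio_sum Q is
   >= 1 when alpha < 1 and <= 1 when alpha > 1, so the correction term is nonnegative,
   and it vanishes at Q = P_alpha. For alpha = 1 the same averaging of ln t <= t - 1 is
   Gibbs' inequality, and for alpha = 0 the claim is |supp P| <= max_{supp P} 1 / Q,
   which again follows from sum Q <= 1. *)

From HB Require Import structures.
From mathcomp Require Import all_boot all_order all_algebra.
From mathcomp Require Import all_classical all_reals ereal exp.
From mathcomp Require Import ring lra.
Set Implicit Arguments.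
Unset Strict Implicit.
Unset Printing Implicit Defensive.
Import Order.TTheory GRing.Theory Num.Theory.
Local Open Scope ring_scope.

Section TangentBounds.
Variable R : realType.

Lemma ln_le_subr1 (z : R) : 0 < z -> ln z <= z - 1.
Proof.
by move=> z_gt0; have := @le_ln1Dx R (z - 1); rewrite (addrC 1) subrK; apply; lra.
Qed.

Lemma powR_le_tangent (e t : R) : 0 < e < 1 -> 0 <= t -> t `^ e <= 1 + e * (t - 1).
Proof.
move=> /andP[e_gt0 e_lt1] t_ge0.
have ie_gt0 : 0 < e^-1 by rewrite invr_gt0.
have ie'_gt0 : 0 < (1 - e)^-1 by rewrite invr_gt0 subr_gt0.
have := @conjugate_powR R (t `^ e) 1 e^-1 (1 - e)^-1 (powR_ge0 _ _) ler01 ie_gt0 ie'_gt0.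
rewrite !invrK (addrC e) subrK => /(_ erefl).
rewrite mulr1 -powRrM divff ?gt_eqF // powRr1 // powR1 /= => young.
by apply: le_trans young _; lra.
Qed.

Lemma powR_ge_tangent (e t : R) : e <= 0 -> 0 < t -> 1 + e * (t - 1) <= t `^ e.
Proof.
move=> e_le0 t_gt0; rewrite /powR gt_eqF //.
by apply: le_trans (expR_ge1Dx _); rewrite lerD2l ler_wnM2l // ln_le_subr1.
Qed.

End TangentBounds.

Lemma dist_sum_le1 (R : realType) (T : finType) (S : {set T}) (Q : T -> R) :
  is_dist Q -> \sum_(x in S) Q x <= 1.
Proof.
move=> [Q_ge0 <-]; rewrite [leRHS](bigID [in S]) /= lerDl.
by apply: sumr_ge0 => x _; exact: Q_ge0.
Qed.

Lemma dist_gt0_in (R : realType) (T : finType) (S : {set T}) (Q : T -> R) :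
  is_dist Q -> ~~ [exists x, (x \in S) && (Q x == 0)] ->
  forall x, x \in S -> 0 < Q x.
Proof.
move=> [Q_ge0 _] /existsPn Q_neq0 x xS.
by rewrite lt0r Q_ge0 andbT; have := Q_neq0 x; rewrite xS.
Qed.

Section WeightedSums.
Variables (R : realType) (T : finType) (S : {set T}) (w Q : T -> R).
Hypotheses (w_gt0 : forall x, x \in S -> 0 < w x) (w_sum1 : \sum_(x in S) w x = 1).
Hypothesis Q_sum_le1 : \sum_(x in S) Q x <= 1.

Lemma sum_tangent (e : R) :
  \sum_(x in S) w x * (1 + e * (Q x / w x - 1)) = 1 + e * (\sum_(x in S) Q x - 1).
Proof.
transitivity (\sum_(x in S) (w x + e * (Q x - w x))).
  by apply: eq_bigr => x xS; field; rewrite gt_eqF ?w_gt0.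
by rewrite big_split /= -mulr_sumr sumrB w_sum1.
Qed.

Lemma gibbs : (forall x, x \in S -> 0 < Q x) ->
  \sum_(x in S) w x * ln (Q x) <= \sum_(x in S) w x * ln (w x).
Proof.
move=> Q_gt0; rewrite -subr_le0 -sumrB.
have sum_diff_le0 : \sum_(x in S) (Q x - w x) <= 0 by rewrite sumrB w_sum1 subr_le0.
apply: le_trans sum_diff_le0; apply: ler_sum => x xS; have wx_gt0 := w_gt0 xS.
rewrite -mulrBr -ln_div ?posrE ?Q_gt0 //.
apply: le_trans (ler_wpM2l (ltW wx_gt0) (ln_le_subr1 (divr_gt0 (Q_gt0 x xS) wx_gt0))) _.
by rewrite mulrBr mulr1 mulrC divfK ?gt_eqF.
Qed.

Lemma sum_powR_ratio_le1 (e : R) : 0 < e < 1 -> (forall x, x \in S -> 0 <= Q x) ->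
  \sum_(x in S) w x * (Q x / w x) `^ e <= 1.
Proof.
move=> e01 Q_ge0; have /andP[e_gt0 _] := e01.
have tangent : \sum_(x in S) w x * (1 + e * (Q x / w x - 1)) <= 1.
  by rewrite sum_tangent gerDl pmulr_rle0 // subr_le0.
apply: le_trans tangent; apply: ler_sum => x xS.
rewrite ler_pM2l ?w_gt0 // powR_le_tangent // divr_ge0 ?Q_ge0 ?ltW ?w_gt0 //.
Qed.

Lemma sum_powR_ratio_ge1 (e : R) : e <= 0 -> (forall x, x \in S -> 0 < Q x) ->
  1 <= \sum_(x in S) w x * (Q x / w x) `^ e.
Proof.
move=> e_le0 Q_gt0.
have tangent : 1 <= \sum_(x in S) w x * (1 + e * (Q x / w x - 1)).
  by rewrite sum_tangent lerDl mulr_le0 // subr_le0.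
apply: le_trans tangent _; apply: ler_sum => x xS.
rewrite ler_pM2l ?w_gt0 // powR_ge_tangent // divr_gt0 ?Q_gt0 ?w_gt0 //.
Qed.

End WeightedSums.

Lemma card_le_bigmax_inv (R : realType) (T : finType) (S : {set T}) (Q : T -> R) :
  (forall x, x \in S -> 0 < Q x) -> \sum_(x in S) Q x <= 1 ->
  #|S|%:R <= \big[Num.max/0]_(x in S) (Q x)^-1.
Proof.
move=> Q_gt0 Q_sum_le1; set M := \big[Num.max/0]_(x in S) _.
have M_ge0 : 0 <= M by exact: bigmax_ge_id.
rewrite -sumr_const.
apply: le_trans (_ : \sum_(x in S) Q x * M <= M); last first.
  by rewrite -mulr_suml -[leRHS]mul1r ler_wpM2r.
apply: ler_sum => x xS; rewrite -(mulfV (lt0r_neq0 (Q_gt0 x xS))).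
by rewrite ler_pM2l ?Q_gt0 //; exact: le_bigmax_cond.
Qed.

Section Distribution.
Variables (R : realType) (T : finType) (P : T -> R).
Hypothesis P_dist : is_dist P.

Lemma notin_supp x : x \notin supp P -> P x = 0.
Proof.
case: P_dist => P_ge0 _; rewrite inE -leNgt => P_le0.
by apply/eqP; rewrite eq_le P_le0 P_ge0.
Qed.

Lemma sum_supp (f : T -> R) : (forall x, x \notin supp P -> f x = 0) ->
  \sum_x f x = \sum_(x in supp P) f x.
Proof.
move=> f_out; rewrite [RHS]big_mkcond; apply: eq_bigr => x _.
by case: ifP => // /negbT /f_out.
Qed.

Lemma sum_supp_mull (g : T -> R) : \sum_x P x * g x = \sum_(x in supp P) P x * g x.
Proof. by apply: sum_supp => x /notin_supp ->; rewrite mul0r. Qed.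

Lemma sum_supp_dist : \sum_(x in supp P) P x = 1.
Proof.
by case: P_dist => _ <-; rewrite (sum_supp notin_supp).
Qed.

Lemma supp_nonempty : exists x0, x0 \in supp P.
Proof.
case: (set_0Vmem (supp P)) => [supp0|[x0 x0S]]; last by exists x0.
by have := sum_supp_dist; rewrite supp0 big_set0 => /eqP; rewrite eq_sym oner_eq0.
Qed.

Lemma sum_supp_gt0 (f : T -> R) : (forall x, x \in supp P -> 0 < f x) ->
  0 < \sum_(x in supp P) f x.
Proof.
move=> f_gt0; have [x0 x0S] := supp_nonempty.
rewrite (bigD1 x0) //= ltr_pwDl ?f_gt0 //.
by apply: sumr_ge0 => x /andP[xS _]; exact: ltW (f_gt0 x xS).
Qed.

Lemma supp_gt0 x : x \in supp P -> 0 < P x.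
Proof. by rewrite inE. Qed.

Lemma card_supp_gt0 : (0 < #|supp P|)%N.
Proof. by have [x0 x0S] := supp_nonempty; apply/card_gt0P; exists x0. Qed.

Lemma scaled0E x : scaled P 0 x = if x \in supp P then #|supp P|%:R^-1 else 0.
Proof. by rewrite /scaled eqxx. Qed.

Lemma is_dist_scaled0 : is_dist (scaled P 0).
Proof.
have n_gt0 : 0 < #|supp P|%:R :> R by rewrite ltr0n card_supp_gt0.
split => [x|]; first by rewrite scaled0E; case: ifP => // _; rewrite invr_ge0 ltW.
rewrite (sum_supp (f := scaled P 0)) => [|x /negbTE xS]; last by rewrite scaled0E xS.
rewrite (eq_bigr (fun _ => #|supp P|%:R^-1)) => [|x xS]; last by rewrite scaled0E xS.
by rewrite sumr_const -[_^-1 *+ _]mulr_natr mulVf ?gt_eqF.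
Qed.

Lemma cross_ent0_scaled : cross_ent 0 P (scaled P 0) = renyi 0 P.
Proof.
have n_gt0 : 0 < #|supp P|%:R :> R by rewrite ltr0n card_supp_gt0.
rewrite /cross_ent /renyi eqxx.
have -> : [exists x, (x \in supp P) && (scaled P 0 x == 0)] = false.
  apply/negbTE/existsPn => x; rewrite scaled0E; case: ifP => //= _.
  by rewrite invr_eq0 gt_eqF.
congr (_%:E); congr (ln _); apply/eqP; rewrite eq_le; apply/andP; split.
  by apply: bigmax_le => [|x xS]; rewrite ?scaled0E ?xS ?invrK // ltW.
have [x0 x0S] := supp_nonempty.
have -> : #|supp P|%:R = (scaled P 0 x0)^-1 by rewrite scaled0E x0S invrK.
exact: le_bigmax_cond.
Qed.

Lemma renyi0_le_cross_ent Q : is_dist Q -> (renyi 0 P <= cross_ent 0 P Q)%E.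
Proof.
move=> Q_dist; rewrite /cross_ent /renyi eqxx.
case: ifP => [_|/negbT /(dist_gt0_in Q_dist) Q_gt0]; first exact: leey.
have n_gt0 : 0 < #|supp P|%:R :> R by rewrite ltr0n card_supp_gt0.
have card_le := card_le_bigmax_inv Q_gt0 (dist_sum_le1 (supp P) Q_dist).
by rewrite lee_fin ler_ln ?posrE // (lt_le_trans n_gt0).
Qed.

Lemma scaled1 : scaled P 1 = P.
Proof.
case: P_dist => P_ge0 P_sum1.
apply/funext => x; rewrite /scaled oner_eq0 powRr1 //.
by rewrite (eq_bigr _ (fun y _ => powRr1 (P_ge0 y))) P_sum1 divr1.
Qed.

Lemma cross_ent1_self : cross_ent 1 P P = renyi 1 P.
Proof.
rewrite /cross_ent /renyi oner_eq0 eqxx.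
have -> // : [exists x, (x \in supp P) && (P x == 0)] = false.
by apply/negbTE/existsPn => x; apply/negP => /andP[/supp_gt0/gt_eqF->].
Qed.

Lemma renyi1_le_cross_ent Q : is_dist Q -> (renyi 1 P <= cross_ent 1 P Q)%E.
Proof.
move=> Q_dist; rewrite /cross_ent /renyi oner_eq0 eqxx.
case: ifP => [_|/negbT /(dist_gt0_in Q_dist) Q_gt0]; first exact: leey.
rewrite lee_fin lerN2 !sum_supp_mull.
exact: gibbs supp_gt0 sum_supp_dist (dist_sum_le1 _ Q_dist) Q_gt0.
Qed.

End Distribution.

Section PositiveOrder.
Variables (R : realType) (T : finType) (P : T -> R) (a : R).
Hypotheses (P_dist : is_dist P) (a_gt0 : 0 < a).

Let Z := \sum_x P x `^ a.

Lemma sum_powR_gt0 : 0 < Z.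
Proof.
rewrite /Z (sum_supp (P := P)) => [|x /(notin_supp P_dist) ->].
  by apply: (sum_supp_gt0 P_dist) => x xS; rewrite powR_gt0 ?supp_gt0.
by rewrite powR0 ?gt_eqF.
Qed.

Lemma scaledE x : scaled P a x = P x `^ a / Z.
Proof. by rewrite /scaled gt_eqF. Qed.

Lemma scaled_gt0 x : x \in supp P -> 0 < scaled P a x.
Proof. by move=> xS; rewrite scaledE divr_gt0 ?sum_powR_gt0 ?powR_gt0 ?supp_gt0. Qed.

Lemma ln_scaled x : x \in supp P -> ln (scaled P a x) = a * ln (P x) - ln Z.
Proof.
move=> xS.
by rewrite scaledE ln_div ?posrE ?powR_gt0 ?sum_powR_gt0 ?supp_gt0 // ln_powR.
Qed.

Lemma is_dist_scaled_gt0 : is_dist (scaled P a).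
Proof.
split => [x|]; first by rewrite scaledE divr_ge0 ?powR_ge0 ?ltW ?sum_powR_gt0.
under eq_bigr do rewrite scaledE.
by rewrite -mulr_suml divff ?gt_eqF ?sum_powR_gt0.
Qed.

Lemma sum_supp_scaled : \sum_(x in supp P) scaled P a x = 1.
Proof.
case: is_dist_scaled_gt0 => _ <-.
apply/esym/(sum_supp (P := P)) => x /(notin_supp P_dist) Px0.
by rewrite scaledE Px0 powR0 ?mul0r ?gt_eqF.
Qed.

Section CrossEntropy.
Hypothesis a_neq1 : a != 1.

Let e := (a - 1) / a.
Let ratio_sum (Q : T -> R) :=
  \sum_(x in supp P) scaled P a x * (Q x / scaled P a x) `^ e.

Lemma cross_termE Q x : x \in supp P -> 0 <= Q x ->
  P x * Q x `^ e = Z `^ a^-1 * (scaled P a x * (Q x / scaled P a x) `^ e).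
Proof.
move=> xS; have Pax_gt0 := scaled_gt0 xS; have Px_gt0 := supp_gt0 xS.
rewrite le_eqVlt => /predU1P[<-|Qx_gt0].
  have e_neq0 : e != 0 by rewrite mulf_eq0 invr_eq0 subr_eq0 negb_or a_neq1 gt_eqF.
  by rewrite mul0r !powR0 ?mulr0.
apply: ln_inj; rewrite ?posrE ?mulr_gt0 ?powR_gt0 ?divr_gt0 ?sum_powR_gt0 //.
rewrite !lnM ?posrE ?mulr_gt0 ?powR_gt0 ?divr_gt0 ?sum_powR_gt0 // !ln_powR.
rewrite ln_div ?posrE // ln_scaled // /e; field; exact: lt0r_neq0.
Qed.

Lemma renyiE : renyi a P = ((1 - a)^-1 * ln Z)%:E.
Proof. by rewrite /renyi gt_eqF // (negbTE a_neq1). Qed.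

(* For alpha < 1 the sum below replaces the infinite summands 0 ^ e by 0, hence
   the separate test for zeros of Q on supp P. *)
Lemma cross_entE Q : is_dist Q ->
  cross_ent a P Q =
  if ((a < 1) && [exists x, (x \in supp P) && (Q x == 0)]) || (ratio_sum Q == 0)
  then +oo%E
  else ((1 - a)^-1 * ln Z + a / (1 - a) * ln (ratio_sum Q))%:E.
Proof.
move=> Q_dist; have [Q_ge0 _] := Q_dist.
have sum_cross : \sum_(x in supp P) P x * Q x `^ e = Z `^ a^-1 * ratio_sum Q.
  by rewrite mulr_sumr; apply: eq_bigr => x xS; exact: cross_termE.
have Za_gt0 : 0 < Z `^ a^-1 by rewrite powR_gt0 ?sum_powR_gt0.
have ln_cross : ratio_sum Q != 0 -> a / (1 - a) * ln (Z `^ a^-1 * ratio_sum Q) =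
    (1 - a)^-1 * ln Z + a / (1 - a) * ln (ratio_sum Q).
  move=> r_neq0; have r_gt0 : 0 < ratio_sum Q.
    rewrite lt0r r_neq0 sumr_ge0 // => x xS.
    by rewrite mulr_ge0 ?powR_ge0 ?ltW ?scaled_gt0.
  rewrite lnM ?posrE // ln_powR; field.
  by rewrite subr_eq0 eq_sym a_neq1 gt_eqF.
rewrite /cross_ent gt_eqF // (negbTE a_neq1) -/e.
case: ltP => a_lt1 /=.
- case: ifP => //= /negbT /(dist_gt0_in Q_dist) Q_gt0.
  have r_gt0 : 0 < ratio_sum Q.
    apply: (sum_supp_gt0 P_dist) => x xS.
    by rewrite mulr_gt0 ?powR_gt0 ?divr_gt0 ?Q_gt0 ?scaled_gt0.
  by rewrite gt_eqF // sum_cross ln_cross ?gt_eqF.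
- rewrite (sum_supp_mull P_dist) sum_cross mulf_eq0 gt_eqF //=.
  by case: ifP => // /negbT /ln_cross ->.
Qed.

Lemma ratio_sum_scaled : ratio_sum (scaled P a) = 1.
Proof.
rewrite -[RHS]sum_supp_scaled; apply: eq_bigr => x xS.
by rewrite divff ?gt_eqF ?scaled_gt0 // powR1 mulr1.
Qed.

Lemma cross_ent_scaled_gt0 : cross_ent a P (scaled P a) = renyi a P.
Proof.
rewrite (cross_entE is_dist_scaled_gt0) ratio_sum_scaled oner_eq0 orbF renyiE.
have -> : [exists x, (x \in supp P) && (scaled P a x == 0)] = false.
  by apply/negbTE/existsPn => x; apply/negP => /andP[/scaled_gt0/gt_eqF->].
by rewrite andbF ln1 mulr0 addr0.
Qed.

Lemma renyi_le_cross_ent_gt0 Q : is_dist Q -> (renyi a P <= cross_ent a P Q)%E.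
Proof.
move=> Q_dist; rewrite cross_entE // renyiE.
case: ifP => [_|/norP[Q_fin r_neq0]]; first exact: leey.
rewrite lee_fin lerDl.
have Q_sum_le1 := dist_sum_le1 (supp P) Q_dist.
case/orP: (lt_total a_neq1) => [a_lt1|a_gt1].
- rewrite a_lt1 /= in Q_fin.
  apply: mulr_ge0; first by rewrite divr_ge0 ?ltW ?subr_gt0.
  apply/ln_ge0/(sum_powR_ratio_ge1 scaled_gt0 sum_supp_scaled Q_sum_le1).
    by rewrite /e pmulr_lle0 ?invr_gt0 // subr_le0 ltW.
  exact: dist_gt0_in Q_fin.
- apply: mulr_le0; first by rewrite pmulr_rle0 // invr_le0 subr_le0 ltW.
  apply/ln_le0/(sum_powR_ratio_le1 scaled_gt0 sum_supp_scaled Q_sum_le1) => [|x _].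
    by rewrite /e divr_gt0 ?subr_gt0 //= ltr_pdivrMr // mul1r ltrBlDr ltrDl.
  by case: Q_dist => Q_ge0 _; exact: Q_ge0.
Qed.

End CrossEntropy.

End PositiveOrder.

Theorem theorem1 (R : realType) (T : finType) (P : T -> R) (alpha : R) :
  is_dist P -> 0 <= alpha ->
  [/\ is_dist (scaled P alpha),
      cross_ent alpha P (scaled P alpha) = renyi alpha P &
      forall Q : T -> R, is_dist Q -> (renyi alpha P <= cross_ent alpha P Q)%E].
Proof.
move=> P_dist alpha_ge0.
have [->|[->|[alpha_gt0 alpha_neq1]]] :
    alpha = 0 \/ alpha = 1 \/ 0 < alpha /\ alpha != 1.
  case: (eqVneq alpha 0) => [|alpha_neq0]; first by left.
  case: (eqVneq alpha 1) => [|alpha_neq1]; first by right; left.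
  by right; right; rewrite lt0r alpha_neq0.
- split; [exact: is_dist_scaled0 P_dist | exact: cross_ent0_scaled P_dist |].
  exact: renyi0_le_cross_ent P_dist.
- rewrite (scaled1 P_dist); split; [exact: P_dist | exact: cross_ent1_self |].
  exact: renyi1_le_cross_ent P_dist.
- split; [exact: is_dist_scaled_gt0 | exact: cross_ent_scaled_gt0 |].
  exact: renyi_le_cross_ent_gt0.
Qed.
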